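(* Fix $p\in[2,\infty)$ and $\alpha\in[1,\infty)$. Let $(X,\|\cdot\|_X)$ be a $K$-convex Banach space of Rademacher cotype $p$. Suppose that $m,n\in\mathbb N$ satisfy $$m\ge\frac{n^{1/p}}{\alpha K_p(X)C_p(X)}.$$ Then for every $f:\mathbb Z_{8m}^n\to X$, $$\sum_{j=1}^n\sum_{x\in\mathbb Z_{8m}^n}\frac{\|f(x+4me_j)-f(x)\|_X^p}{m^p}\lesssim_p\frac{(\alpha K_p(X)C_p(X))^p}{2^n}\sum_{\varepsilon\in\{-1,1\}^n}\sum_{x\in\mathbb Z_{8m}^n}\|f(x+\varepsilon)-f(x)\|_X^p.$$
   Context: $\mathbb Z_{8m}^n=(\mathbb Z/8m\mathbb Z)^n$, integer vectors added modulo $8m$; $e_j$ standard basis. $C_p(X)$ is the cotype $p$ constant: the least $C$ such that for all $N$ and $x_1,\ldots,x_N\in X$, $(\sum_j\|x_j\|^p)^{1/p}\le C(\mathbb E\|\sum_j\varepsilon_jx_j\|^p)^{1/p}$ ($\varepsilon$ uniform in $\{-1,1\}^N$); $X$ has cotype $p$ if $C_p(X)<\infty$. For $h:\{-1,1\}^N\to X$, its Rademacher projection is $\mathrm{Rad}(h)(\varepsilon)=\sum_{j=1}^N\big(2^{-N}\sum_{\delta}h(\delta)\delta_j\big)\varepsilon_j$; $K_p(X)$ is the least $K\in[1,\infty]$ such that $\sum_\varepsilon\|\mathrm{Rad}(h)(\varepsilon)\|^p\le K^p\sum_\varepsilon\|h(\varepsilon)\|^p$ for all $N$ and $h$; $X$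 is $K$-convex if $K_p(X)<\infty$. $a\lesssim_p b$ means $a\le c^pb$ for a universal constant $c$. *)

From mathcomp Require Import all_boot.
From Stdlib Require Import Reals.

Set Implicit Arguments.
Unset Strict Implicit.
Unset Printing Implicit Defensive.

(* x^p for x >= 0 and real p > 0, with 0^p = 0 (Stdlib's Rpower 0 p = 1). *)
Definition rpow (x p : R) : R :=
  if Rle_dec x 0 then 0%R else Rpower x p.

Record Banach := {
  carrier :> Type;
  vzero : carrier;
  vadd : carrier -> carrier -> carrier;
  vopp : carrier -> carrier;
  vscal : R -> carrier -> carrier;
  vnorm : carrier -> R;
  vaddA : forall x y z, vadd x (vadd y z) = vadd (vadd x y) z;
  vaddC : forall x y, vadd x y = vadd y x;
  vadd0 : forall x, vadd x vzero = x;
  vaddN : forall x, vadd x (vopp x) = vzero;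
  vscalA : forall a b x, vscal a (vscal b x) = vscal (a * b) x;
  vscal1 : forall x, vscal 1 x = x;
  vscalDr : forall a x y, vscal a (vadd x y) = vadd (vscal a x) (vscal a y);
  vscalDl : forall a b x, vscal (a + b) x = vadd (vscal a x) (vscal b x);
  vnorm_ge0 : forall x, (0 <= vnorm x)%R;
  vnorm_eq0 : forall x, vnorm x = 0%R -> x = vzero;
  vnormZ : forall a x, vnorm (vscal a x) = (Rabs a * vnorm x)%R;
  vnorm_tri : forall x y, (vnorm (vadd x y) <= vnorm x + vnorm y)%R;
  vcomplete : forall u : nat -> carrier,
    (forall eps, (0 < eps)%R -> exists N, forall k l, (N <= k)%coq_nat -> (N <= l)%coq_nat ->
        (vnorm (vadd (u k) (vopp (u l))) < eps)%R) ->
    exists lim, forall eps, (0 < eps)%R -> exists N, forall k, (N <= k)%coq_nat ->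
        (vnorm (vadd (u k) (vopp lim)) < eps)%R
}.

Definition vsub (X : Banach) (x y : X) : X := vadd x (vopp y).

Notation "\rsum_ ( i : T ) F" := (\big[Rplus/0%R]_(i : T) F)
  (at level 41, F at level 41, i, T at level 50).
Definition vsum (X : Banach) (N : nat) (F : 'I_N -> X) : X :=
  \big[@vadd X/vzero X]_(j < N) F j.

(* sign vectors {-1,1}^N are encoded by {ffun 'I_N -> bool}; true = +1 *)
Definition sgnR (b : bool) : R := if b then 1%R else (-1)%R.

Definition cotype_const (X : Banach) (p C : R) : Prop :=
  (0 <= C)%R /\
  forall (N : nat) (x : 'I_N -> X),
    (rpow (\rsum_(j : 'I_N) rpow (vnorm (x j)) p) (/ p)
     <= C * rpow (/ 2 ^ N * \rsum_(e : {ffun 'I_N -> bool})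
                   rpow (vnorm (vsum (fun j => vscal (sgnR (e j)) (x j)))) p) (/ p))%R.

Definition Rad (X : Banach) (N : nat) (h : {ffun 'I_N -> bool} -> X)
  (e : {ffun 'I_N -> bool}) : X :=
  vsum (fun j : 'I_N =>
    vscal (sgnR (e j))
      (vscal (/ 2 ^ N)%R
        (\big[@vadd X/vzero X]_(d : {ffun 'I_N -> bool}) vscal (sgnR (d j)) (h d)))).

Definition Kconvex_const (X : Banach) (p K : R) : Prop :=
  (1 <= K)%R /\
  forall (N : nat) (h : {ffun 'I_N -> bool} -> X),
    (\rsum_(e : {ffun 'I_N -> bool}) rpow (vnorm (Rad h e)) p
     <= rpow K p * \rsum_(e : {ffun 'I_N -> bool}) rpow (vnorm (h e)) p)%R.

Definition is_least (P : R -> Prop) (c : R) : Prop :=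
  P c /\ forall c', P c' -> (c <= c')%R.

(* C_p(X) and K_p(X): the least constants (finite, i.e. X has cotype p and is K-convex) *)
Definition cotype_constant (X : Banach) (p Cp : R) := is_least (cotype_const X p) Cp.
Definition Kconvex_constant (X : Banach) (p Kp : R) := is_least (Kconvex_const X p) Kp.

Definition addmod (N : nat) (x : 'I_N) (k : nat) : 'I_N :=
  Ordinal (ltn_pmod (x + k) (leq_ltn_trans (leq0n x) (ltn_ord x))).

Definition shift_dir (N n : nat) (x : {ffun 'I_n -> 'I_N}) (j : 'I_n) (a : nat)
  : {ffun 'I_n -> 'I_N} :=
  [ffun i => if i == j then addmod (x i) a else x i].

(* x + eps in Z_N^n, eps in {-1,1}^n (-1 is added as N - 1) *)
Definition shift_sign (N n : nat) (x : {ffun 'I_n -> 'I_N}) (e : {ffun 'I_n -> bool})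
  : {ffun 'I_n -> 'I_N} :=
  [ffun i => addmod (x i) (if e i then 1 else N.-1)].

From HB Require Import structures.
From mathcomp Require Import all_boot.
From Stdlib Require Import Reals Lra.

Set Implicit Arguments.
Unset Strict Implicit.
Unset Printing Implicit Defensive.

(* Fix a direction j and smooth f over half-cubes: smooth j y is the mean of f (y + d)
   over the sign vectors d with d_j = 1.  Pairing each such d with its flip at j shows
   that smooth j (y + 2e_j) - smooth j y = 2 rad_coef j (y + 2e_j), where rad_coef j x is
   the j-th Rademacher coefficient of d |-> f (x + d) - f x, while by Jensen
   |smooth j y - f y|^p is at most 2^(1-n) times the local energy
   sum_e |f (y + e) - f y|^p.  Write f (x + 4m e_j) - f x as two smoothing errors plus
   2m increments of smooth j.  Summed over x and j, the errors cost at most 4n 2^(-n)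
   times the total energy and the increments cost (4m)^p sum_j |rad_coef j x|^p, which
   cotype p followed by K-convexity bounds by (C_p K_p)^p 2^(-n) sum_e |f (x + e) - f x|^p.
   Dividing by m^p, the hypothesis m^p >= n / (alpha K_p C_p)^p absorbs the error terms,
   and the constant is 12. *)

Local Open Scope R_scope.

Lemma Rdiv_ge0 a b : 0 <= a -> 0 < b -> 0 <= a / b.
Proof. by move=> a_ge0 b_gt0; apply: Rmult_le_pos a_ge0 _; left; apply: Rinv_0_lt_compat. Qed.

Lemma rpow0 p : rpow 0 p = 0.
Proof. by rewrite /rpow; case: Rle_dec => H /=; lra. Qed.

Lemma rpowE x p : 0 < x -> rpow x p = Rpower x p.
Proof. by move=> x_gt0; rewrite /rpow; case: Rle_dec => H /=; lra. Qed.

Lemma rpow_gt0 x p : 0 < x -> 0 < rpow x p.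
Proof. by move=> x_gt0; rewrite rpowE //; apply: exp_pos. Qed.

Lemma rpow_ge0 x p : 0 <= rpow x p.
Proof. by rewrite /rpow; case: Rle_dec => H /=; [lra | left; apply: exp_pos]. Qed.

Lemma rpow1 x : 0 <= x -> rpow x 1 = x.
Proof. by case=> [x_gt0|<-]; [rewrite rpowE // Rpower_1 | rewrite rpow0]. Qed.

Lemma rpow_le p a b : 0 <= p -> 0 <= a <= b -> rpow a p <= rpow b p.
Proof.
move=> p_ge0 [[a_gt0|<-] le_ab]; last by rewrite rpow0; apply: rpow_ge0.
by rewrite !rpowE; try lra; apply: Rle_Rpower_l; lra.
Qed.

Lemma rpow_le_exp x q r : 1 <= x -> q <= r -> rpow x q <= rpow x r.
Proof. by move=> x_ge1 le_qr; rewrite !rpowE; try lra; apply: Rle_Rpower. Qed.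

Lemma rpowM a b p : 0 <= a -> 0 <= b -> rpow (a * b) p = rpow a p * rpow b p.
Proof.
move=> [a_gt0|<-]; last by rewrite Rmult_0_l !rpow0 Rmult_0_l.
move=> [b_gt0|<-]; last by rewrite Rmult_0_r !rpow0 Rmult_0_r.
by rewrite !rpowE ?Rpower_mult_distr //; apply: Rmult_lt_0_compat.
Qed.

Lemma rpowK p a : 0 < p -> 0 <= a -> rpow (rpow a (/ p)) p = a.
Proof.
move=> p_gt0 [a_gt0|<-]; last by rewrite !rpow0.
rewrite (@rpowE a) // rpowE ?Rpower_mult ?Rinv_l ?Rpower_1 //; try lra.
exact: exp_pos.
Qed.

(* x^p = x * exp((p - 1) ln x) together with exp y >= 1 + y and ln x >= 1 - 1/x. *)
Lemma rpow_bernoulli x p : 1 <= p -> 0 <= x -> 1 + p * (x - 1) <= rpow x p.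
Proof.
move=> p_ge1 [x_gt0|<-]; last by rewrite rpow0; lra.
have rpow_split : rpow x p = x * exp ((p - 1) * ln x).
  by rewrite rpowE // -[in Rpower x p](Rplus_minus 1 p) Rpower_plus Rpower_1.
have ln_ge : 1 - / x <= ln x.
  have := exp_ineq1_le (- ln x); rewrite exp_Ropp exp_ln //; lra.
have exp_ge : 1 + (p - 1) * (1 - / x) <= exp ((p - 1) * ln x).
  apply: Rle_trans (exp_ineq1_le _); apply: Rplus_le_compat_l.
  by apply: Rmult_le_compat_l; lra.
have xVx : x * / x = 1 by field; lra.
rewrite rpow_split; nra.
Qed.

HB.instance Definition _ := Monoid.isComLaw.Build R 0 Rplus
  (fun x y z => esym (Rplus_assoc x y z)) Rplus_comm Rplus_0_l.

Section RealSums.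
Variables (I : Type) (r : seq I).
Implicit Types (P : pred I) (F G : I -> R).

Lemma rsum_le P F G : (forall i, P i -> F i <= G i) ->
  \big[Rplus/0]_(i <- r | P i) F i <= \big[Rplus/0]_(i <- r | P i) G i.
Proof. by move=> le_FG; apply: (big_ind2 Rle) => //; [lra | move=> *; lra]. Qed.

Lemma rsum_ge0 P F : (forall i, P i -> 0 <= F i) -> 0 <= \big[Rplus/0]_(i <- r | P i) F i.
Proof. by move=> F_ge0; apply: (big_ind (Rle 0)) => //; [lra | move=> *; lra]. Qed.

Lemma rsum_mull P c F :
  \big[Rplus/0]_(i <- r | P i) (c * F i) = c * \big[Rplus/0]_(i <- r | P i) F i.
Proof. by apply: esym; apply: (big_morph (Rmult c)) => [a b|]; ring. Qed.

Lemma rsum_filter_le P F : (forall i, 0 <= F i) ->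
  \big[Rplus/0]_(i <- r | P i) F i <= \big[Rplus/0]_(i <- r) F i.
Proof. by move=> F_ge0; rewrite big_mkcond; apply: rsum_le => i _; case: (P i) => //; lra. Qed.

(* Summing the tangent lines of t |-> t^p at the mean M kills the linear terms. *)
Lemma rpow_mean_le P p F (K := \big[Rplus/0]_(i <- r | P i) 1) :
  1 <= p -> (forall i, P i -> 0 <= F i) -> 0 < K ->
  rpow (\big[Rplus/0]_(i <- r | P i) F i / K) p <=
  \big[Rplus/0]_(i <- r | P i) rpow (F i) p / K.
Proof.
move=> p_ge1 F_ge0 K_gt0.
set S := \big[Rplus/0]_(i <- r | P i) F i; set M := S / K.
have [M_gt0|M_eq0] : 0 < M \/ 0 = M.
  by apply: Rle_lt_or_eq; apply: Rdiv_ge0 => //; apply: rsum_ge0.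
- have S_gt0 : 0 < S.
    by have := Rmult_lt_0_compat _ _ M_gt0 K_gt0; rewrite /M /Rdiv Rmult_assoc Rinv_l; lra.
  apply: (Rmult_le_reg_r K) => //; rewrite /Rdiv Rmult_assoc Rinv_l ?Rmult_1_r; last lra.
  have tangent_sum : \big[Rplus/0]_(i <- r | P i) (rpow M p * (1 + p * (F i / M - 1)))
      = rpow M p * K.
    rewrite (eq_bigr (fun i => rpow M p * (1 - p) * 1 + rpow M p * p / M * F i));
      last by move=> i _; field; lra.
    by rewrite big_split /= !rsum_mull -/S -/K /M; field; lra.
  rewrite -tangent_sum; apply: rsum_le => i Pi.
  have FM_ge0 : 0 <= F i / M by apply: Rdiv_ge0 => //; apply: F_ge0.
  have -> : rpow (F i) p = rpow M p * rpow (F i / M) p.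
    by rewrite -rpowM; [congr rpow; field | lra | ]; lra.
  apply: Rmult_le_compat_l; first exact: rpow_ge0.
  exact: rpow_bernoulli.
- rewrite -/M -M_eq0 rpow0; apply: Rdiv_ge0 => //.
  by apply: rsum_ge0 => i _; apply: rpow_ge0.
Qed.

Lemma rpow_sum_le P p F (K := \big[Rplus/0]_(i <- r | P i) 1) :
  1 <= p -> (forall i, P i -> 0 <= F i) -> 0 < K ->
  rpow (\big[Rplus/0]_(i <- r | P i) F i) p <=
  rpow K p / K * \big[Rplus/0]_(i <- r | P i) rpow (F i) p.
Proof.
move=> p_ge1 F_ge0 K_gt0.
set S := \big[Rplus/0]_(i <- r | P i) F i.
have S_ge0 : 0 <= S by apply: rsum_ge0.
have -> : S = K * (S / K) by field; lra.
rewrite rpowM; try lra; last exact: Rdiv_ge0.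
rewrite /Rdiv Rmult_assoc; apply: Rmult_le_compat_l; first exact: rpow_ge0.
by rewrite [/ K * _]Rmult_comm; apply: rpow_mean_le.
Qed.
End RealSums.

Lemma rpow_sum3_le p a b c : 1 <= p -> 0 <= a -> 0 <= b -> 0 <= c ->
  rpow (a + b + c) p <= rpow 3 p / 3 * (rpow a p + rpow b p + rpow c p).
Proof.
move=> p_ge1 a_ge0 b_ge0 c_ge0.
have := @rpow_sum_le R [:: a; b; c] predT p Rabs p_ge1 (fun x _ => Rabs_pos x).
rewrite !big_cons /= !big_nil !Rabs_pos_eq // !Rplus_0_r !Rplus_assoc.
have -> : 1 + (1 + 1) = 3 by ring.
by apply; lra.
Qed.

Lemma rsum1_card (T : finType) : \big[Rplus/0]_(i : T) 1 = INR #|T|.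
Proof.
rewrite big_const_seq count_predT (_ : size _ = #|T|); last by rewrite cardT enumT.
by elim: #|T| => [|k IH] //; rewrite iterS IH S_INR; ring.
Qed.

Section BanachAlgebra.
Variable X : Banach.
Implicit Types (a : R) (x y z : X).
Local Notation "0v" := (vzero X).

Lemma vadd0l x : vadd 0v x = x.
Proof. by rewrite vaddC vadd0. Qed.

Lemma vaddI x y z : vadd x y = vadd x z -> y = z.
Proof.
move=> eq_xy; rewrite -(vadd0l y) -(vadd0l z) -(vaddN x) (vaddC x).
by rewrite -!vaddA eq_xy.
Qed.

Lemma vopp_unique x y : vadd x y = 0v -> y = vopp x.
Proof. by move=> xy0; apply: (vaddI (x := x)); rewrite xy0 vaddN. Qed.

Lemma vscal0 x : vscal 0 x = 0v.
Proof. by apply: (vaddI (x := vscal 0 x)); rewrite vadd0 -vscalDl Rplus_0_l. Qed.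

Lemma vscalN1 x : vscal (-1) x = vopp x.
Proof.
apply: vopp_unique; rewrite -{1}(vscal1 x) -vscalDl.
by rewrite Rplus_opp_r vscal0.
Qed.

Lemma vscalN a x : vscal a (vopp x) = vopp (vscal a x).
Proof. by rewrite -!vscalN1 !vscalA Rmult_comm. Qed.

Lemma voppD x y : vopp (vadd x y) = vadd (vopp x) (vopp y).
Proof. by rewrite -!vscalN1 vscalDr. Qed.

Lemma vnormN x : vnorm (vopp x) = vnorm x.
Proof. by rewrite -vscalN1 vnormZ Rabs_Ropp Rabs_R1 Rmult_1_l. Qed.

Lemma vnorm0 : vnorm 0v = 0.
Proof. by rewrite -(vscal0 0v) vnormZ Rabs_R0 Rmult_0_l. Qed.

Lemma vsubv x : vsub x x = 0v.
Proof. exact: vaddN. Qed.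

Lemma vsub_add x y z : vadd (vsub x y) (vsub y z) = vsub x z.
Proof. by rewrite /vsub -vaddA (vaddA (vopp y)) (vaddC (vopp y)) vaddN vadd0l. Qed.

Lemma vnorm_subC x y : vnorm (vsub x y) = vnorm (vsub y x).
Proof.
rewrite -vnormN; congr vnorm; apply: esym; apply: vopp_unique.
by rewrite vsub_add vsubv.
Qed.

Lemma vnorm_sub_tri x y z : vnorm (vsub x z) <= vnorm (vsub x y) + vnorm (vsub y z).
Proof. by rewrite -(vsub_add x y z); apply: vnorm_tri. Qed.

Lemma vsubZ a x y : vsub (vscal a x) (vscal a y) = vscal a (vsub x y).
Proof. by rewrite /vsub vscalDr vscalN. Qed.

Lemma vsub_subr x y z : vsub (vsub x z) (vsub y z) = vsub x y.
Proof.
rewrite -(vsub_add x z y); congr vadd; apply: esym; apply: vopp_unique.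
by rewrite vaddC vsub_add vsubv.
Qed.

HB.instance Definition _ :=
  Monoid.isComLaw.Build (carrier X) 0v (@vadd X) (@vaddA X) (@vaddC X) vadd0l.

Section VectorSums.
Variables (I : Type) (r : seq I) (P : pred I).

Lemma vnorm_sum (F : I -> X) :
  vnorm (\big[@vadd X/0v]_(i <- r | P i) F i) <= \big[Rplus/0]_(i <- r | P i) vnorm (F i).
Proof.
apply: (big_ind2 (fun x s => vnorm x <= s)); first by rewrite vnorm0; lra.
  by move=> x s y t le_xs le_yt; apply: Rle_trans (vnorm_tri x y) _; lra.
by move=> *; lra.
Qed.

Lemma vsub_sum (F G : I -> X) :
  vsub (\big[@vadd X/0v]_(i <- r | P i) F i) (\big[@vadd X/0v]_(i <- r | P i) G i) =
  \big[@vadd X/0v]_(i <- r | P i) vsub (F i) (G i).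
Proof.
rewrite /vsub big_split /=; congr vadd.
apply: (big_morph (@vopp X)); first exact: voppD.
by apply: esym; apply: vopp_unique; rewrite vadd0.
Qed.

Lemma vsum_const x :
  \big[@vadd X/0v]_(i <- r | P i) x = vscal (\big[Rplus/0]_(i <- r | P i) 1) x.
Proof.
apply: (big_rec2 (fun y s => y = vscal s x)); first by rewrite vscal0.
by move=> i y s _ ->; rewrite vscalDl vscal1.
Qed.
End VectorSums.

Lemma vnorm_telescope (u : nat -> X) k :
  vnorm (vsub (u k) (u 0%nat)) <= \big[Rplus/0]_(i < k) vnorm (vsub (u i.+1) (u i)).
Proof.
elim: k => [|k IH]; first by rewrite big_ord0 vsubv vnorm0; lra.
rewrite big_ord_recr /=; apply: Rle_trans (vnorm_sub_tri _ (u k) _) _.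
by rewrite Rplus_comm; apply: Rplus_le_compat_r.
Qed.
End BanachAlgebra.

Definition flip_at n (j : 'I_n) (d : {ffun 'I_n -> bool}) : {ffun 'I_n -> bool} :=
  [ffun i => if i == j then ~~ d i else d i].

Lemma flip_atK n (j : 'I_n) : involutive (flip_at j).
Proof. by move=> d; apply/ffunP => i; rewrite !ffunE; case: (i == j); rewrite ?negbK. Qed.

Lemma flip_at_inj n (j : 'I_n) : injective (flip_at j).
Proof. exact: inv_inj (flip_atK j). Qed.

Lemma flip_at_id n (j : 'I_n) d : flip_at j d j = ~~ d j.
Proof. by rewrite ffunE eqxx. Qed.

Lemma big_flip_at (T : Type) (idx : T) (op : Monoid.com_law idx) n (j : 'I_n)
    (F : {ffun 'I_n -> bool} -> T) :
  \big[op/idx]_(d : {ffun 'I_n -> bool} | ~~ d j) F d =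
  \big[op/idx]_(d : {ffun 'I_n -> bool} | d j) F (flip_at j d).
Proof.
rewrite (reindex_inj (@flip_at_inj n j)) /=.
by apply: eq_bigl => d; rewrite flip_at_id negbK.
Qed.

Lemma INR_expn (m k : nat) : INR (expn m k) = INR m ^ k.
Proof. by elim: k => [|k IH] //; rewrite expnS mult_INR IH. Qed.

Lemma rsum1_sign_true n (j : 'I_n) :
  \big[Rplus/0]_(d : {ffun 'I_n -> bool} | d j) 1 = 2 ^ n / 2.
Proof.
have flip_eq : \big[Rplus/0]_(d : {ffun 'I_n -> bool} | ~~ d j) 1 =
               \big[Rplus/0]_(d : {ffun 'I_n -> bool} | d j) 1 by rewrite big_flip_at.
have := rsum1_card {ffun 'I_n -> bool}.
rewrite (bigID (fun d : {ffun 'I_n -> bool} => d j)) /= flip_eq card_ffun card_bool card_ord.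
(* [set] identifies the two copies of this sum, which differ in hidden instances. *)
set s := \big[Rplus/0]_(d : {ffun 'I_n -> bool} | d j) 1.
rewrite INR_expn (_ : INR 2 = 2) => [?|]; [lra | simpl; ring].
Qed.

Section Grid.
Variables (N n : nat).
Local Notation grid := {ffun 'I_n -> 'I_N}.

Lemma addmodA (x : 'I_N) a b : addmod (addmod x a) b = addmod x (a + b).
Proof. by apply: val_inj; rewrite /= modnDml addnA. Qed.

Lemma addmod0 (x : 'I_N) : addmod x 0 = x.
Proof. by apply: val_inj; rewrite /= addn0 modn_small. Qed.

Lemma addmod_inj a : injective (fun x : 'I_N => addmod x a).
Proof.
move=> x y /(congr1 val) /= /eqP; rewrite eqn_modDr !modn_small // => /eqP.
exact: val_inj.
Qed.

Lemma shift_dir0 (x : grid) j : shift_dir x j 0 = x.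
Proof. by apply/ffunP => i; rewrite ffunE; case: eqP => [->|]; rewrite ?addmod0. Qed.

Lemma shift_dirD (x : grid) j a b : shift_dir (shift_dir x j a) j b = shift_dir x j (a + b).
Proof. by apply/ffunP => i; rewrite !ffunE; case: eqP => // _; rewrite addmodA. Qed.

Lemma shift_dir_inj j a : injective (fun x : grid => shift_dir x j a).
Proof.
move=> x y /ffunP eq_xy; apply/ffunP => i; have := eq_xy i; rewrite !ffunE.
by case: eqP => // _; apply: addmod_inj.
Qed.

Lemma rsum_shift_dir (F : grid -> R) j a :
  \big[Rplus/0]_(x : grid) F (shift_dir x j a) = \big[Rplus/0]_(x : grid) F x.
Proof. by rewrite [RHS](reindex_inj (@shift_dir_inj j a)). Qed.

Lemma shift_sign_flip (y : grid) j (d : {ffun 'I_n -> bool}) : (0 < N)%nat -> d j ->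
  shift_sign (shift_dir y j 2) (flip_at j d) = shift_sign y d.
Proof.
move=> N_gt0 dj; apply/ffunP => i; rewrite !ffunE.
case: eqP => [->|_] //; rewrite dj /= addmodA; apply: val_inj => /=.
by rewrite (_ : 2 + N.-1 = 1 + N)%nat ?addnA ?modnDr //; case: N N_gt0.
Qed.
End Grid.

Lemma vsum_sgnR_flip (X : Banach) n (j : 'I_n) (h : {ffun 'I_n -> bool} -> X) :
  \big[@vadd X/vzero X]_(d : {ffun 'I_n -> bool}) vscal (sgnR (d j)) (h d) =
  \big[@vadd X/vzero X]_(d : {ffun 'I_n -> bool} | d j) vsub (h d) (h (flip_at j d)).
Proof.
rewrite (bigID (fun d : {ffun 'I_n -> bool} => d j)) big_flip_at -big_split /=.
by apply: eq_bigr => d dj; rewrite flip_at_id dj /= vscal1 vscalN1.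
Qed.

Section Smoothing.
Variables (X : Banach) (p : R) (N n : nat) (f : {ffun 'I_n -> 'I_N} -> X).
Hypotheses (p_ge1 : 1 <= p) (N_gt0 : (0 < N)%nat).
Local Notation grid := {ffun 'I_n -> 'I_N}.
Local Notation signs := {ffun 'I_n -> bool}.

Definition sign_energy (x : grid) : R :=
  \big[Rplus/0]_(e : signs) rpow (vnorm (vsub (f (shift_sign x e)) (f x))) p.

Definition smooth (j : 'I_n) (y : grid) : X :=
  vscal (2 / 2 ^ n) (\big[@vadd X/vzero X]_(d : signs | d j) f (shift_sign y d)).

Definition rad_coef (j : 'I_n) (x : grid) : X :=
  vscal (/ 2 ^ n) (\big[@vadd X/vzero X]_(d : signs)
                     vscal (sgnR (d j)) (vsub (f (shift_sign x d)) (f x))).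

Let pow2n_gt0 : 0 < 2 ^ n. Proof. by apply: pow_lt; lra. Qed.
Let inv_pow2n_ge0 : 0 <= / 2 ^ n. Proof. by left; apply: Rinv_0_lt_compat. Qed.
Let two_div_pow2n_ge0 : 0 <= 2 / 2 ^ n. Proof. by apply: Rdiv_ge0; lra. Qed.

Lemma smooth_step j y :
  vnorm (vsub (smooth j (shift_dir y j 2)) (smooth j y)) =
  2 * vnorm (rad_coef j (shift_dir y j 2)).
Proof.
rewrite /smooth /rad_coef vsubZ vsub_sum vsum_sgnR_flip.
rewrite [in RHS](eq_bigr (fun d => vsub (f (shift_sign (shift_dir y j 2) d))
                                (f (shift_sign y d)))); last first.
  by move=> d dj; rewrite vsub_subr shift_sign_flip.
by rewrite !vnormZ !Rabs_pos_eq // /Rdiv Rmult_assoc.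
Qed.

Lemma smooth_err j y :
  rpow (vnorm (vsub (smooth j y) (f y))) p <= 2 / 2 ^ n * sign_energy y.
Proof.
pose D d := vnorm (vsub (f (shift_sign y d)) (f y)).
have K_eq := rsum1_sign_true j.
have -> : vsub (smooth j y) (f y) =
    vscal (2 / 2 ^ n) (\big[@vadd X/vzero X]_(d : signs | d j) vsub (f (shift_sign y d)) (f y)).
  rewrite -vsub_sum vsum_const K_eq -vsubZ vscalA.
  by rewrite (_ : 2 / 2 ^ n * (2 ^ n / 2) = 1) ?vscal1 //; field; lra.
apply: Rle_trans (_ : rpow (\big[Rplus/0]_(d : signs | d j) D d / (2 ^ n / 2)) p <= _).
  apply: rpow_le; first lra.
  rewrite vnormZ Rabs_pos_eq //; split; first by apply: Rmult_le_pos; last apply: vnorm_ge0.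
  rewrite (_ : _ / (2 ^ n / 2) = 2 / 2 ^ n * \big[Rplus/0]_(d : signs | d j) D d).
    exact: Rmult_le_compat_l (vnorm_sum _ _ _).
  by field; lra.
rewrite -K_eq; apply: Rle_trans (rpow_mean_le _ _ _) _ => //.
- by move=> d _; apply: vnorm_ge0.
- by rewrite K_eq; lra.
rewrite K_eq (_ : forall a, a / (2 ^ n / 2) = 2 / 2 ^ n * a); last by move=> a; field; lra.
apply: Rmult_le_compat_l => //; apply: rsum_filter_le => d; exact: rpow_ge0.
Qed.

(* [Rad (fun d => f (x + d) - f x) e] is [\sum_j e_j rad_coef j x] by conversion, so
   cotype and K-convexity chain up directly. *)
Lemma rad_coef_cotype C K x : cotype_const X p C -> Kconvex_const X p K ->
  \big[Rplus/0]_(j < n) rpow (vnorm (rad_coef j x)) p <=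
  rpow C p * rpow K p * (/ 2 ^ n * sign_energy x).
Proof.
move=> [C_ge0 cotype] [K_ge1 Kconvex].
have := cotype n (rad_coef ^~ x).
set A := \big[Rplus/0]_(j < n) _; set B := / 2 ^ n * _ => cotype_x.
have A_ge0 : 0 <= A by apply: rsum_ge0 => j _; apply: rpow_ge0.
have B_ge0 : 0 <= B by apply: Rmult_le_pos => //; apply: rsum_ge0 => e _; apply: rpow_ge0.
apply: (@Rle_trans _ (rpow C p * B)).
  rewrite -{1}(rpowK (p := p) (a := A)); try lra.
  rewrite -(rpowK (p := p) (a := B)); try lra.
  rewrite -rpowM; [|lra|exact: rpow_ge0].
  by apply: rpow_le; [lra | split; [apply: rpow_ge0 | exact: cotype_x]].
rewrite Rmult_assoc; apply: Rmult_le_compat_l; first exact: rpow_ge0.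
rewrite /B (Rmult_comm (rpow K p)) Rmult_assoc; apply: Rmult_le_compat_l => //.
by rewrite Rmult_comm; apply: (Kconvex n (fun d => vsub (f (shift_sign x d)) (f x))).
Qed.

Lemma vnorm_shift_even_le j x k :
  vnorm (vsub (f (shift_dir x j (2 * k))) (f x)) <=
  vnorm (vsub (smooth j (shift_dir x j (2 * k))) (f (shift_dir x j (2 * k))))
  + \big[Rplus/0]_(i < k) (2 * vnorm (rad_coef j (shift_dir x j (2 * i.+1))))
  + vnorm (vsub (smooth j x) (f x)).
Proof.
set xk := shift_dir x j (2 * k).
apply: Rle_trans (vnorm_sub_tri _ (smooth j xk) _) _.
rewrite vnorm_subC Rplus_assoc; apply: Rplus_le_compat_l.
apply: Rle_trans (vnorm_sub_tri _ (smooth j x) _) _; apply: Rplus_le_compat_r.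
have := vnorm_telescope (fun i => smooth j (shift_dir x j (2 * i))) k.
rewrite /= muln0 shift_dir0 => telescope; apply: Rle_trans telescope _; right.
apply: eq_bigr => i _.
have -> : shift_dir x j (2 * i.+1) = shift_dir (shift_dir x j (2 * i)) j 2.
  by rewrite shift_dirD mulnS addnC.
exact: smooth_step.
Qed.

Let T := \big[Rplus/0]_(x : grid) sign_energy x.

Lemma rsum_smooth_err_le j :
  \big[Rplus/0]_(x : grid) rpow (vnorm (vsub (smooth j x) (f x))) p <= 2 / 2 ^ n * T.
Proof. by rewrite /T -rsum_mull; apply: rsum_le => x _; apply: smooth_err. Qed.

Lemma rsum_rad_path_le j k : (0 < k)%nat ->
  \big[Rplus/0]_(x : grid)
    rpow (\big[Rplus/0]_(i < k) (2 * vnorm (rad_coef j (shift_dir x j (2 * i.+1))))) p <=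
  rpow (2 * INR k) p * \big[Rplus/0]_(x : grid) rpow (vnorm (rad_coef j x)) p.
Proof.
move=> k_gt0.
have k_pos : 0 < INR k by apply: lt_0_INR; apply/ltP.
have k_card : \big[Rplus/0]_(i < k) 1 = INR k by rewrite rsum1_card card_ord.
apply: Rle_trans (_ : \big[Rplus/0]_(x : grid) (rpow (INR k) p / INR k *
    \big[Rplus/0]_(i < k) (rpow 2 p * rpow (vnorm (rad_coef j (shift_dir x j (2 * i.+1)))) p))
    <= _).
  apply: rsum_le => x _; rewrite -k_card.
  apply: Rle_trans (rpow_sum_le _ _ _) _ => //.
  - by move=> i _; have := vnorm_ge0 (rad_coef j (shift_dir x j (2 * i.+1))); lra.
  - by rewrite k_card.
  apply: Rmult_le_compat_l; first by apply: Rdiv_ge0; [apply: rpow_ge0 | rewrite k_card].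
  by right; apply: eq_bigr => i _; rewrite rpowM; [| lra | apply: vnorm_ge0].
set Rj := \big[Rplus/0]_(x : grid) rpow (vnorm (rad_coef j x)) p.
rewrite rsum_mull exchange_big /=.
rewrite (eq_bigr (fun _ => rpow 2 p * Rj * 1)); last first.
  move=> i _; rewrite Rmult_1_r rsum_mull.
  by rewrite (rsum_shift_dir (fun x => rpow (vnorm (rad_coef j x)) p)).
rewrite rsum_mull k_card rpowM; [|lra|exact: pos_INR].
by right; field; lra.
Qed.

Lemma rsum_shift_even_le j k : (0 < k)%nat ->
  \big[Rplus/0]_(x : grid) rpow (vnorm (vsub (f (shift_dir x j (2 * k))) (f x))) p <=
  rpow 3 p / 3 * (4 / 2 ^ n * T +
    rpow (2 * INR k) p * \big[Rplus/0]_(x : grid) rpow (vnorm (rad_coef j x)) p).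
Proof.
move=> k_gt0.
pose err x := vnorm (vsub (smooth j x) (f x)).
pose path x := \big[Rplus/0]_(i < k) (2 * vnorm (rad_coef j (shift_dir x j (2 * i.+1)))).
apply: Rle_trans (_ : \big[Rplus/0]_(x : grid) (rpow 3 p / 3 *
    (rpow (err (shift_dir x j (2 * k))) p + rpow (path x) p + rpow (err x) p)) <= _).
  apply: rsum_le => x _.
  have path_ge0 : 0 <= path x.
    by apply: rsum_ge0 => i _; have := vnorm_ge0 (rad_coef j (shift_dir x j (2 * i.+1))); lra.
  apply: Rle_trans (rpow_sum3_le p_ge1 (vnorm_ge0 _) path_ge0 (vnorm_ge0 _)).
  by apply: rpow_le; [lra | split; [apply: vnorm_ge0 | apply: vnorm_shift_even_le]].
rewrite rsum_mull; apply: Rmult_le_compat_l; first by apply: Rdiv_ge0; [apply: rpow_ge0 | lra].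
rewrite !big_split /=.
have err_shift := rsum_smooth_err_le j.
rewrite -(rsum_shift_dir (fun x => rpow (err x) p) j (2 * k)) in err_shift.
have err_bound := rsum_smooth_err_le j; have path_bound := rsum_rad_path_le j k_gt0.
apply: Rle_trans (Rplus_le_compat _ _ _ _
  (Rplus_le_compat _ _ _ _ err_shift path_bound) err_bound) _.
(* As in [rsum1_sign_true], [set] identifies the two copies of the sum. *)
by set Rj := \big[Rplus/0]_(x : grid) rpow (vnorm (rad_coef j x)) p; lra.
Qed.

Lemma energy_shift_even_le C K k : cotype_const X p C -> Kconvex_const X p K -> (0 < k)%nat ->
  \big[Rplus/0]_(j < n) \big[Rplus/0]_(x : grid)
    rpow (vnorm (vsub (f (shift_dir x j (2 * k))) (f x))) p <=
  rpow 3 p / 3 * (4 * INR n + rpow (2 * INR k) p * (rpow C p * rpow K p)) * (/ 2 ^ n * T).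
Proof.
move=> cotype Kconvex k_gt0.
set c := rpow 3 p / 3; set b := rpow (2 * INR k) p.
apply: (@Rle_trans _ (\big[Rplus/0]_(j < n) (c * (4 / 2 ^ n * T +
    b * \big[Rplus/0]_(x : grid) rpow (vnorm (rad_coef j x)) p)))).
  by apply: rsum_le => j _; apply: rsum_shift_even_le.
have rad_bound : \big[Rplus/0]_(j < n) \big[Rplus/0]_(x : grid) rpow (vnorm (rad_coef j x)) p
    <= rpow C p * rpow K p * (/ 2 ^ n * T).
  rewrite exchange_big /= /T -2!rsum_mull.
  by apply: rsum_le => x _; apply: rad_coef_cotype.
have c_ge0 : 0 <= c by apply: Rdiv_ge0; [apply: rpow_ge0 | lra].
have b_ge0 : 0 <= b by apply: rpow_ge0.
rewrite rsum_mull big_split /= [X in _ + X]rsum_mull.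
rewrite (eq_bigr (fun _ => 4 / 2 ^ n * T * 1)); last by move=> j _; rewrite Rmult_1_r.
rewrite rsum_mull rsum1_card card_ord.
apply: Rle_trans (Rmult_le_compat_l _ _ _ c_ge0
  (Rplus_le_compat_l _ _ _ (Rmult_le_compat_l _ _ _ b_ge0 rad_bound))) _.
by right; rewrite /Rdiv; ring.
Qed.
End Smoothing.

Lemma cotype_const0_norm (X : Banach) p (x : X) : 0 < p -> cotype_const X p 0 -> vnorm x = 0.
Proof.
move=> p_gt0 [_ cotype]; have := cotype 1%nat (fun _ => x).
rewrite big_ord1 Rmult_0_l => norm_le0.
case: (vnorm_ge0 x) => // norm_gt0.
by have := rpow_gt0 (/ p) (rpow_gt0 p norm_gt0); lra.
Qed.

Lemma rpow_3_4_le_12 p : 1 <= p -> rpow 3 p / 3 * (4 + rpow 4 p) <= rpow 12 p.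
Proof.
move=> p_ge1.
have four_le : 4 <= rpow 4 p by rewrite -{1}(rpow1 (x := 4)); [apply: rpow_le_exp | ]; lra.
have -> : rpow 12 p = rpow 3 p * rpow 4 p by rewrite -rpowM; [congr rpow; ring | lra | lra].
have three_gt0 : 0 < rpow 3 p by apply: rpow_gt0; lra.
have : 0 <= rpow 3 p * (rpow 4 p - 4) by apply: Rmult_le_pos; lra.
lra.
Qed.

Lemma rpow_le_of_root_le p a b Q : 0 < p -> 0 <= a -> 0 <= b -> 0 < Q ->
  b >= rpow a (/ p) / Q -> a <= rpow b p * rpow Q p.
Proof.
move=> p_gt0 a_ge0 b_ge0 Q_gt0 b_ge.
rewrite -rpowM; try lra; rewrite -{1}(rpowK (p := p) (a := a)) //.
apply: rpow_le; first lra; split; first exact: rpow_ge0.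
have := Rmult_le_compat_r _ _ _ (Rlt_le _ _ Q_gt0) (Rge_le _ _ b_ge).
by rewrite /Rdiv Rmult_assoc Rinv_l ?Rmult_1_r //; lra.
Qed.

Lemma energy_shift_4m_le (X : Banach) p Q C K m n (f : {ffun 'I_n -> 'I_(8 * m)} -> X) :
  1 <= p -> (0 < m)%nat -> cotype_const X p C -> Kconvex_const X p K ->
  rpow C p * rpow K p <= rpow Q p -> INR n <= rpow (INR m) p * rpow Q p ->
  \rsum_(j : 'I_n) \rsum_(x : {ffun 'I_n -> 'I_(8 * m)})
     (rpow (vnorm (vsub (f (shift_dir x j (4 * m))) (f x))) p / rpow (INR m) p)
  <= rpow 12 p * (rpow Q p / 2 ^ n *
     \rsum_(e : {ffun 'I_n -> bool}) \rsum_(x : {ffun 'I_n -> 'I_(8 * m)})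
        rpow (vnorm (vsub (f (shift_sign x e)) (f x))) p).
Proof.
move=> p_ge1 m_gt0 cotype Kconvex CK_le n_le.
have N_gt0 : (0 < 8 * m)%nat by rewrite muln_gt0.
have two_m_gt0 : (0 < 2 * m)%nat by rewrite muln_gt0.
have := energy_shift_even_le f p_ge1 N_gt0 cotype Kconvex two_m_gt0.
rewrite (_ : 2 * (2 * m) = 4 * m)%nat ?mulnA //.
set S := \big[Rplus/0]_(j < n) _; set T := \big[Rplus/0]_(x : {ffun 'I_n -> 'I_(8 * m)}) _.
move=> S_le.
have M_gt0 : 0 < rpow (INR m) p by apply: rpow_gt0; apply: lt_0_INR; apply/ltP.
have -> : \rsum_(j : 'I_n) \rsum_(x : {ffun 'I_n -> 'I_(8 * m)})
    (rpow (vnorm (vsub (f (shift_dir x j (4 * m))) (f x))) p / rpow (INR m) p) =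
    / rpow (INR m) p * S.
  rewrite -rsum_mull; apply: eq_bigr => j _; rewrite -rsum_mull.
  by apply: eq_bigr => x _; rewrite Rmult_comm.
rewrite exchange_big /= -/T.
have pow_4m : rpow (2 * INR (2 * m)) p = rpow 4 p * rpow (INR m) p.
  rewrite mult_INR -Rmult_assoc -rpowM; [|lra|apply: pos_INR].
  by congr (rpow (_ * _) p); simpl; ring.
rewrite pow_4m in S_le.
set c := rpow 3 p / 3 in S_le *; set M := rpow (INR m) p in M_gt0 n_le S_le *.
set U := / 2 ^ n * T in S_le *.
have c_ge0 : 0 <= c by apply: Rdiv_ge0; [apply: rpow_ge0 | lra].
have U_ge0 : 0 <= U.
  apply: Rmult_le_pos; first by left; apply: Rinv_0_lt_compat; apply: pow_lt; lra.
  by apply: rsum_ge0 => x _; apply: rsum_ge0 => e _; apply: rpow_ge0.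
have n_div_le : INR n / M <= rpow Q p.
  by apply: (Rmult_le_reg_r M) => //; rewrite /Rdiv Rmult_assoc Rinv_l; lra.
apply: Rle_trans (Rmult_le_compat_l _ _ _ (Rlt_le _ _ (Rinv_0_lt_compat _ M_gt0)) S_le) _.
have -> : / M * (c * (4 * INR n + rpow 4 p * M * (rpow C p * rpow K p)) * U) =
    c * (4 * (INR n / M) + rpow 4 p * (rpow C p * rpow K p)) * U by field; lra.
have -> : rpow 12 p * (rpow Q p / 2 ^ n * T) = rpow 12 p * rpow Q p * U.
  by rewrite /U /Rdiv; ring.
apply: Rmult_le_compat_r => //.
apply: Rle_trans (_ : c * (4 + rpow 4 p) * rpow Q p <= _); last first.
  by apply: Rmult_le_compat_r; [apply: rpow_ge0 | apply: rpow_3_4_le_12].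
rewrite Rmult_assoc Rmult_plus_distr_r; apply: Rmult_le_compat_l => //.
apply: Rplus_le_compat; apply: Rmult_le_compat_l => //; [lra | apply: rpow_ge0].
Qed.

Theorem mainTheorem14 :
  exists c : R, (0 < c)%R /\
  forall (p alpha : R) (X : Banach) (Cp Kp : R) (m n : nat)
         (f : {ffun 'I_n -> 'I_(8 * m)} -> X),
    (2 <= p)%R -> (1 <= alpha)%R ->
    cotype_constant X p Cp -> Kconvex_constant X p Kp ->
    (INR m >= rpow (INR n) (/ p) / (alpha * Kp * Cp))%R ->
    (\rsum_(j : 'I_n) \rsum_(x : {ffun 'I_n -> 'I_(8 * m)})
        (rpow (vnorm (vsub (f (shift_dir x j (4 * m))) (f x))) p / rpow (INR m) p)
     <= rpow c p *
        (rpow (alpha * Kp * Cp) p / 2 ^ n *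
         \rsum_(e : {ffun 'I_n -> bool}) \rsum_(x : {ffun 'I_n -> 'I_(8 * m)})
            rpow (vnorm (vsub (f (shift_sign x e)) (f x))) p))%R.
Proof.
exists 12; split; first lra.
move=> p alpha X Cp Kp m n f p_ge2 alpha_ge1 [cotype _] [Kconvex _] m_ge.
have p_ge1 : 1 <= p by lra.
have [C_ge0 _] := cotype; have [K_ge1 _] := Kconvex.
have [degenerate | [m_gt0 C_gt0]] : (forall j x, vnorm (vsub (f (shift_dir x j (4 * m))) (f x)) = 0)
    \/ ((0 < m)%nat /\ 0 < Cp).
- case: m f m_ge => [|m] f m_ge; first by left => j x; case: (x j).
  case: C_ge0 => [C_gt0|C_eq0]; first by right.
  by left => j x; apply: cotype_const0_norm (_ : 0 < p) _; [lra | rewrite C_eq0].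
- rewrite big1 => [|j _]; last first.
    by rewrite big1 // => x _; rewrite degenerate rpow0 /Rdiv Rmult_0_l.
  apply: Rmult_le_pos; first exact: rpow_ge0.
  apply: Rmult_le_pos; first by apply: Rdiv_ge0; [apply: rpow_ge0 | apply: pow_lt; lra].
  by apply: rsum_ge0 => e _; apply: rsum_ge0 => x _; apply: rpow_ge0.
have Q_gt0 : 0 < alpha * Kp * Cp by apply: Rmult_lt_0_compat; [apply: Rmult_lt_0_compat |]; lra.
apply: (energy_shift_4m_le f p_ge1 m_gt0 cotype Kconvex).
- rewrite -rpowM; try lra; apply: rpow_le; first lra.
  have : 0 <= (alpha - 1) * (Kp * Cp) by apply: Rmult_le_pos; nra.
  by split; nra.
- by apply: rpow_le_of_root_le m_ge; [lra | apply: pos_INR | apply: pos_INR |].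
Qed.
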